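(* Let $p\in(0,1)$, $d\ge2$ an integer, and $\psi(v)=-\frac{p}{d-p}\ln(v)-\ln(1+pv)$, so that $\mathrm{Re}\,\psi(v)=-\frac{p}{d-p}\ln|v|-\ln|1+pv|$. For each $v$ write the $d$ roots (with multiplicity) of $u(1+u)^{d-1}=v(1+v)^{d-1}$ as $v,u_1(v),\dots,u_{d-1}(v)$, where $u_1$ is the non-trivial solution with $u_1(-1/d)=-1/d$ and $u_2(v),\dots,u_{d-1}(v)$ are the other non-trivial solutions. Then there exists a path $\Gamma_0$ encircling the origin and passing through $v=-1/d$ such that $$\mathrm{Re}\,\psi(v)-\mathrm{Re}\,\psi(u_i(v))<0$$ for all $v\in\Gamma_0$ and $i=1,\dots,d-1$, except for the solution $u_1(v)$ at the point $v=-1/d$. *)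

From Stdlib Require Import Reals List.
From Coquelicot Require Import Coquelicot.
Open Scope R_scope.

Fixpoint Cpow (z : C) (n : nat) : C :=
  match n with
  | O => RtoC 1
  | S k => Cmult z (Cpow z k)
  end.

Definition fpoly (d : nat) (u : C) : C :=
  Cmult u (Cpow (Cplus (RtoC 1) u) (d - 1)).

(* Re psi(v) = -(p/(d-p)) ln|v| - ln|1+pv|, as an extended real:
   it equals +oo exactly at the singularities v = 0 and v = -1/p
   (where both log terms tend to +oo). *)
Definition RePsi (p : R) (d : nat) (v : C) : Rbar :=
  match Req_EM_T (Cmod v * Cmod (Cplus (RtoC 1) (Cmult (RtoC p) v))) 0 with
  | left _ => p_infty
  | right _ =>
      Finite (- (p / (INR d - p)) * ln (Cmod v)
              - ln (Cmod (Cplus (RtoC 1) (Cmult (RtoC p) v))))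
  end.

(* us is the list (with multiplicity) of the d-1 non-trivial roots u of
   u(1+u)^(d-1) = v(1+v)^(d-1), i.e. f(u) - f(v) = (u - v) * prod_i (u - us_i). *)
Definition nontrivial_roots (d : nat) (v : C) (us : list C) : Prop :=
  length us = (d - 1)%nat /\
  forall u : C,
    Cminus (fpoly d u) (fpoly d v)
    = Cmult (Cminus u v) (fold_right Cmult (RtoC 1) (map (fun w => Cminus u w) us)).

Definition polar_pt (r th : R -> R) (t : R) : C :=
  (r t * cos (th t), r t * sin (th t)).

(* A simple closed continuous curve t in [0,1] |-> r(t) e^{i theta(t)}, with
   r > 0 and continuous lift theta of the argument, winding once (positively)
   around the origin. *)
Definition encircling_origin (r th : R -> R) : Prop :=
  (forall t, 0 <= t <= 1 -> continuous r t /\ continuous th t /\ 0 < r t) /\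
  r 1 = r 0 /\ th 1 = th 0 + 2 * PI /\
  (forall s t, 0 <= s < 1 -> 0 <= t < 1 -> polar_pt r th s = polar_pt r th t -> s = t).

From Pilot Require Import Defs.
From Stdlib Require Import Reals List.
From Coquelicot Require Import Coquelicot.
Open Scope R_scope.
From Stdlib Require Import Lra Lia Classical.

(* The path is the circle |v| = 1/d.  Writing u = e^z, f(u) = u (1+u)^(d-1) becomes
   e^(G z) with G z = z + (d-1) Log (1 + e^z), and Re G' >= 0 on the half plane
   Re z <= - ln d, with equality only at the point corresponding to u = -1/d.  Hence f is
   injective on the closed disk |u| <= 1/d, and every root u <> v of f(u) = f(v) has
   |u| > 1/d.  On the level set |u| |1+u|^(d-1) = |f(v)|, exp (-2 Re psi(u)) is a strictly
   decreasing function of |u| beyond 1/d, so Re psi(v) < Re psi(u).  Finally v itself is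
   a root of f(u) - f(v) of multiplicity >= 2 only where f'(v) = 0, i.e. at v = -1/d,
   and there f''(v) <> 0: so v occurs among the u_i at most once, and only at -1/d. *)

Lemma INR_ge_1 (m : nat) : (1 <= m)%nat -> 1 <= INR m.
Proof. intros Hm. apply le_INR in Hm. exact Hm. Qed.

Lemma INR_S_ge_2 (m : nat) : (1 <= m)%nat -> 2 <= INR (S m).
Proof. intros Hm. rewrite S_INR. pose proof (INR_ge_1 m Hm). lra. Qed.

(* [Defs.Cpow] is a copy of Coquelicot's [Cpow] (notation [^]); they are convertible. *)
Lemma fpoly_Cpow (d : nat) (u : C) : fpoly d u = (u * (1 + u) ^ (d - 1))%C.
Proof. reflexivity. Qed.

Definition polar (r t : R) : C := (r * cos t, r * sin t).

Lemma cos_half_sq (x : R) : cos x = 1 - 2 * sin (x / 2) ^ 2.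
Proof. replace x with (2 * (x / 2)) at 1 by field. rewrite cos_2a_sin. ring. Qed.

Lemma cos_eq_1_small (x : R) : - (2 * PI) < x < 2 * PI -> cos x = 1 -> x = 0.
Proof.
  intros Hx Hc. rewrite cos_half_sq in Hc.
  assert (Hs : sin (x / 2) = 0) by nra.
  destruct (Rtotal_order x 0) as [Hlt | [-> | Hgt]]; [| reflexivity |].
  - assert (Hpos : 0 < sin (- x / 2)) by (apply sin_gt_0; lra).
    replace (- x / 2) with (- (x / 2)) in Hpos by field. rewrite sin_neg in Hpos. lra.
  - assert (0 < sin (x / 2)) by (apply sin_gt_0; lra). lra.
Qed.

Lemma cos_sin_eq_2kPI (a b : R) :
  cos a = cos b -> sin a = sin b -> exists k : Z, a = b + 2 * IZR k * PI.
Proof.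
  intros Hc Hs.
  assert (H1 : cos (a - b) = 1).
  { rewrite cos_minus, Hc, Hs. pose proof (sin2_cos2 b) as Hb. unfold Rsqr in Hb. lra. }
  rewrite cos_half_sq in H1.
  assert (H2 : sin ((a - b) / 2) = 0) by nra.
  destruct (sin_eq_0_0 _ H2) as [k Hk]. exists k. lra.
Qed.

Lemma cos_sin_2kPI (k : Z) : cos (2 * IZR k * PI) = 1 /\ sin (2 * IZR k * PI) = 0.
Proof.
  assert (Hs : sin (IZR k * PI) = 0) by (apply sin_eq_0_1; exists k; reflexivity).
  split.
  - rewrite cos_half_sq. replace (2 * IZR k * PI / 2) with (IZR k * PI) by field.
    rewrite Hs. ring.
  - replace (2 * IZR k * PI) with (2 * (IZR k * PI)) by ring.
    rewrite sin_2a, Hs. ring.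
Qed.

Lemma cos_shift_2kPI (y : R) (k : Z) : cos (y + 2 * IZR k * PI) = cos y.
Proof. destruct (cos_sin_2kPI k) as [Hc Hs]. rewrite cos_plus, Hc, Hs. ring. Qed.

Lemma sin_shift_2kPI (y : R) (k : Z) : sin (y + 2 * IZR k * PI) = sin y.
Proof. destruct (cos_sin_2kPI k) as [Hc Hs]. rewrite sin_plus, Hc, Hs. ring. Qed.

Lemma polar_shift_2kPI (r y : R) (k : Z) : polar r (y + 2 * IZR k * PI) = polar r y.
Proof. unfold polar. rewrite cos_shift_2kPI, sin_shift_2kPI. reflexivity. Qed.

Lemma Cmod_polar (r t : R) : 0 <= r -> Cmod (polar r t) = r.
Proof.
  intros Hr. unfold Cmod, polar. cbn [fst snd].
  replace ((r * cos t) ^ 2 + (r * sin t) ^ 2) with (r ^ 2).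
  - apply sqrt_pow2. exact Hr.
  - pose proof (sin2_cos2 t) as Ht. unfold Rsqr in Ht. nra.
Qed.

Lemma polar_mult (r1 t1 r2 t2 : R) :
  Cmult (polar r1 t1) (polar r2 t2) = polar (r1 * r2) (t1 + t2).
Proof. unfold Cmult, polar. cbn [fst snd]. rewrite cos_plus, sin_plus. f_equal; ring. Qed.

Lemma Cpow_polar (r t : R) (n : nat) : (polar r t ^ n)%C = polar (r ^ n) (INR n * t).
Proof.
  induction n as [|n IH]; cbn [Cpow].
  - unfold polar, RtoC. rewrite Rmult_0_l, cos_0, sin_0. f_equal; ring.
  - rewrite IH, polar_mult, S_INR. replace (t + INR n * t) with ((INR n + 1) * t) by ring.
    reflexivity.
Qed.

Lemma polar_exp_inj (a s b t : R) :
  polar (exp a) s = polar (exp b) t -> a = b /\ exists k : Z, s = t + 2 * IZR k * PI.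
Proof.
  intros E.
  assert (Hab : a = b).
  { apply exp_inv. rewrite <- (Cmod_polar (exp a) s), <- (Cmod_polar (exp b) t), E;
      try reflexivity; left; apply exp_pos. }
  subst b. split; [reflexivity |].
  unfold polar in E. injection E as Ec Es.
  pose proof (exp_pos a).
  apply Rmult_eq_reg_l in Ec; [| lra]. apply Rmult_eq_reg_l in Es; [| lra].
  apply cos_sin_eq_2kPI; assumption.
Qed.

Lemma polar_exp_surj (u : C) : u <> RtoC 0 -> exists x y, u = polar (exp x) y.
Proof.
  intros Hu. destruct u as [a b].
  assert (Hr : 0 < Cmod (a, b)) by (apply Cmod_gt_0; exact Hu).
  set (r := Cmod (a, b)) in *.
  assert (Hr2 : r ^ 2 = a ^ 2 + b ^ 2).
  { unfold r, Cmod. cbn [fst snd]. rewrite pow2_sqrt; [reflexivity | nra]. }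
  set (c := a / r).
  assert (Hc : -1 <= c <= 1).
  { unfold c. split; apply Rmult_le_reg_r with r; auto; field_simplify; nra. }
  assert (Hsq : sqrt (1 - c²) = Rabs b / r).
  { replace (1 - c²) with ((Rabs b / r) ^ 2).
    - apply sqrt_pow2. apply Rdiv_le_0_compat; [apply Rabs_pos | lra].
    - unfold c, Rsqr. replace ((Rabs b / r) ^ 2) with (Rabs b ^ 2 / r ^ 2) by (field; lra).
      rewrite pow2_abs. apply Rmult_eq_reg_r with (r ^ 2); [| nra].
      field_simplify; lra. }
  exists (ln r). unfold polar. rewrite exp_ln by exact Hr.
  destruct (Rle_or_lt 0 b) as [Hb | Hb].
  - exists (acos c). rewrite cos_acos, sin_acos, Hsq, Rabs_right by lra.
    unfold c. f_equal; field; lra.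
  - exists (- acos c). rewrite cos_neg, sin_neg, cos_acos, sin_acos, Hsq, Rabs_left by lra.
    unfold c. f_equal; field; lra.
Qed.

(* [lift_re] + i [lift_im] is G z = z + m Log (1 + e^z) at z = x + iy, so that
   u (1+u)^m = e^(G z) for u = e^z with Re z < 0 ([fpoly_polar_exp]). *)
Definition onep_re (x y : R) : R := 1 + exp x * cos y.
Definition onep_im (x y : R) : R := exp x * sin y.
Definition onep_norm2 (x y : R) : R := onep_re x y ^ 2 + onep_im x y ^ 2.
Definition lift_re (m : nat) (x y : R) : R := x + INR m / 2 * ln (onep_norm2 x y).
Definition lift_im (m : nat) (x y : R) : R := y + INR m * atan (onep_im x y / onep_re x y).

(* Re G'(z), since e^z / (1 + e^z) has real part (|1+e^z|^2 - Re (1+e^z)) / |1+e^z|^2. *)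
Definition lift_slope (m : nat) (x y : R) : R :=
  1 + INR m * (onep_norm2 x y - onep_re x y) / onep_norm2 x y.

Lemma exp_lt_1 (x : R) : x < 0 -> exp x < 1.
Proof. intros Hx. rewrite <- exp_0. apply exp_increasing. exact Hx. Qed.

Lemma onep_re_pos (x y : R) : x < 0 -> 0 < onep_re x y.
Proof.
  intros Hx. unfold onep_re. pose proof (exp_lt_1 x Hx). pose proof (exp_pos x).
  pose proof (COS_bound y). nra.
Qed.

Lemma onep_norm2_pos (x y : R) : x < 0 -> 0 < onep_norm2 x y.
Proof. intros Hx. pose proof (onep_re_pos x y Hx). unfold onep_norm2. nra. Qed.

Lemma one_plus_polar_exp (x y : R) : x < 0 ->
  Cplus (RtoC 1) (polar (exp x) y)
  = polar (sqrt (onep_norm2 x y)) (atan (onep_im x y / onep_re x y)).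
Proof.
  intros Hx. pose proof (onep_re_pos x y Hx) as Ha. pose proof (onep_norm2_pos x y Hx) as Hq.
  assert (Hs : sqrt (1 + (onep_im x y / onep_re x y)²) = sqrt (onep_norm2 x y) / onep_re x y).
  { replace (1 + (onep_im x y / onep_re x y)²) with (onep_norm2 x y / onep_re x y ^ 2).
    - rewrite sqrt_div_alt, sqrt_pow2 by nra. reflexivity.
    - unfold onep_norm2, Rsqr. field. lra. }
  unfold polar at 2. rewrite cos_atan, sin_atan, Hs.
  assert (0 < sqrt (onep_norm2 x y)) by (apply sqrt_lt_R0; exact Hq).
  unfold polar, RtoC, Cplus. cbn [fst snd].
  unfold onep_re, onep_im in *. f_equal; field; lra.
Qed.

Lemma fpoly_polar_exp (m : nat) (x y : R) : x < 0 ->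
  fpoly (S m) (polar (exp x) y) = polar (exp (lift_re m x y)) (lift_im m x y).
Proof.
  intros Hx. pose proof (onep_norm2_pos x y Hx) as Hq.
  assert (Hsq : 0 < sqrt (onep_norm2 x y)) by (apply sqrt_lt_R0; exact Hq).
  rewrite fpoly_Cpow. replace (S m - 1)%nat with m by lia.
  rewrite one_plus_polar_exp, Cpow_polar, polar_mult by exact Hx.
  unfold lift_re, lift_im. f_equal.
  rewrite exp_plus, <- (exp_ln (sqrt (onep_norm2 x y) ^ m)) by (apply pow_lt; exact Hsq).
  f_equal. f_equal. rewrite ln_pow by exact Hsq.
  rewrite <- (sqrt_sqrt (onep_norm2 x y)) at 2 by lra.
  rewrite ln_mult by exact Hsq. field.
Qed.

Lemma lift_re_shift_2kPI (m : nat) (x y : R) (k : Z) :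
  lift_re m x (y + 2 * IZR k * PI) = lift_re m x y.
Proof.
  unfold lift_re, onep_norm2, onep_re, onep_im. rewrite cos_shift_2kPI, sin_shift_2kPI.
  reflexivity.
Qed.

Lemma lift_im_shift_2kPI (m : nat) (x y : R) (k : Z) :
  lift_im m x (y + 2 * IZR k * PI) = lift_im m x y + 2 * IZR k * PI.
Proof.
  unfold lift_im, onep_re, onep_im. rewrite cos_shift_2kPI, sin_shift_2kPI. ring.
Qed.

Lemma exp_le_inv_iff (x D : R) : 0 < D -> (exp x <= / D <-> x <= - ln D).
Proof.
  intros HD. rewrite <- ln_Rinv, <- (exp_ln (/ D)) at 1 by (try apply Rinv_0_lt_compat; exact HD).
  split; intros H.
  - destruct (Rle_or_lt x (ln (/ D))) as [|Hlt]; [assumption|].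
    apply exp_increasing in Hlt. lra.
  - destruct H as [Hlt | ->]; [left; apply exp_increasing, Hlt | right; reflexivity].
Qed.

Lemma lift_slope_mul_norm2 (m : nat) (x y : R) : x < 0 ->
  lift_slope m x y * onep_norm2 x y
  = (1 - exp x) * (1 - INR (S m) * exp x) + (INR m + 2) * exp x * (1 + cos y).
Proof.
  intros Hx. pose proof (onep_norm2_pos x y Hx). rewrite S_INR.
  unfold lift_slope. field_simplify; [| lra].
  unfold onep_norm2, onep_re, onep_im. pose proof (sin2_cos2 y) as Hy. unfold Rsqr in Hy.
  replace ((exp x * sin y) ^ 2) with (exp x ^ 2 * (1 - cos y * cos y)) by (rewrite <- Hy; ring).
  ring.
Qed.

Lemma derive_vanishes_near_0 (h h' : R -> R) (eps : R) :
  (forall t, 0 <= t <= 1 -> is_derive h t (h' t)) ->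
  (forall t, 0 <= t <= 1 -> 0 <= h' t) -> h 0 = h 1 -> 0 < eps <= 1 / 3 ->
  exists c1 c2, 0 < c1 < c2 /\ c2 < 2 * eps /\ h' c1 = 0 /\ h' c2 = 0.
Proof.
  intros Hd Hpos Hh Heps.
  assert (Hmvt : forall a b, 0 <= a < b -> b <= 1 ->
            exists c, h b - h a = h' c * (b - a) /\ a < c < b).
  { intros a b Hab Hb. apply MVT_cor2; [lra |].
    intros c Hc. apply is_derive_Reals, Hd. lra. }
  destruct (Hmvt 0 eps) as [c1 [E1 B1]]; [lra | lra |].
  destruct (Hmvt eps (2 * eps)) as [c2 [E2 B2]]; [lra | lra |].
  destruct (Hmvt (2 * eps) 1) as [c3 [E3 B3]]; [lra | lra |].
  assert (P1 : 0 <= h' c1 * (eps - 0)) by (apply Rmult_le_pos; [apply Hpos |]; lra).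
  assert (P2 : 0 <= h' c2 * (2 * eps - eps)) by (apply Rmult_le_pos; [apply Hpos |]; lra).
  assert (P3 : 0 <= h' c3 * (1 - 2 * eps)) by (apply Rmult_le_pos; [apply Hpos |]; lra).
  assert (Z1 : h' c1 * (eps - 0) = 0) by lra.
  assert (Z2 : h' c2 * (2 * eps - eps) = 0) by lra.
  exists c1, c2. split; [lra | split; [lra | split]].
  - apply Rmult_integral in Z1 as [Z | Z]; lra.
  - apply Rmult_integral in Z2 as [Z | Z]; lra.
Qed.

Lemma cos_diff_of_cos_eq_m1 (a b : R) : cos a = -1 -> cos b = -1 -> cos (a - b) = 1.
Proof.
  intros Ha Hb. pose proof (sin2_cos2 a) as Sa. pose proof (sin2_cos2 b) as Sb.
  rewrite Ha in Sa. rewrite Hb in Sb. unfold Rsqr in Sa, Sb.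
  assert (sin a = 0) by nra. assert (sin b = 0) by nra.
  rewrite cos_minus, Ha, Hb. nra.
Qed.

Section HalfPlane.
Variable m : nat.
Hypothesis Hm : (1 <= m)%nat.

Let D := INR (S m).

Lemma half_plane_neg (x : R) : x <= - ln D -> x < 0.
Proof.
  intros Hx. pose proof (INR_S_ge_2 m Hm) as HD; fold D in HD.
  assert (0 < ln D) by (rewrite <- ln_1; apply ln_increasing; lra).
  lra.
Qed.

Lemma lift_slope_terms_nonneg (x y : R) : x <= - ln D ->
  0 < onep_norm2 x y /\ exp x < 1 /\
  0 <= (1 - exp x) * (1 - D * exp x) /\ 0 <= (INR m + 2) * exp x * (1 + cos y).
Proof.
  intros Hx. pose proof (half_plane_neg x Hx) as Hx0.
  pose proof (INR_S_ge_2 m Hm) as HD; fold D in HD.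
  apply exp_le_inv_iff in Hx; [| lra].
  assert (HDx : D * exp x <= 1).
  { apply Rmult_le_compat_l with (r := D) in Hx; [| lra]. rewrite Rinv_r in Hx; lra. }
  pose proof (exp_pos x). pose proof (exp_lt_1 x Hx0). pose proof (pos_INR m).
  pose proof (COS_bound y).
  split; [apply onep_norm2_pos, Hx0 | split; [assumption | split]].
  - apply Rmult_le_pos; lra.
  - apply Rmult_le_pos; [apply Rmult_le_pos |]; lra.
Qed.

Lemma lift_slope_nonneg (x y : R) : x <= - ln D -> 0 <= lift_slope m x y.
Proof.
  intros Hx. destruct (lift_slope_terms_nonneg x y Hx) as [Hq [_ [H1 H2]]].
  pose proof (lift_slope_mul_norm2 m x y (half_plane_neg x Hx)) as E. fold D in E.
  apply (Rmult_le_reg_r (onep_norm2 x y)); [exact Hq |]. rewrite Rmult_0_l, E. lra.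
Qed.

Lemma lift_slope_eq_0 (x y : R) : x <= - ln D -> lift_slope m x y = 0 ->
  x = - ln D /\ cos y = -1.
Proof.
  intros Hx Hzero. destruct (lift_slope_terms_nonneg x y Hx) as [_ [Hx1 [H1 H2]]].
  pose proof (lift_slope_mul_norm2 m x y (half_plane_neg x Hx)) as E. fold D in E.
  rewrite Hzero, Rmult_0_l in E.
  pose proof (INR_S_ge_2 m Hm) as HD; fold D in HD. pose proof (exp_pos x).
  assert (Ha : (1 - exp x) * (1 - D * exp x) = 0) by lra.
  assert (Hb : (INR m + 2) * exp x * (1 + cos y) = 0) by lra.
  split.
  - apply Rmult_integral in Ha as [Ha | Ha]; [lra |].
    rewrite <- ln_Rinv, <- (ln_exp x) by lra. f_equal.
    apply Rmult_eq_reg_l with D; [| lra]. rewrite Rinv_r; lra.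
  - apply Rmult_integral in Hb as [Hb | Hb]; [| lra].
    pose proof (pos_INR m). apply Rmult_integral in Hb as [Hb | Hb]; lra.
Qed.

Lemma is_derive_lift_along (x0 y0 dx dy t : R) : x0 + t * dx < 0 ->
  is_derive (fun s => dx * lift_re m (x0 + s * dx) (y0 + s * dy)
                      + dy * lift_im m (x0 + s * dx) (y0 + s * dy)) t
    ((dx ^ 2 + dy ^ 2) * lift_slope m (x0 + t * dx) (y0 + t * dy)).
Proof.
  intros Hx. pose proof (onep_re_pos _ (y0 + t * dy) Hx) as Ha.
  pose proof (onep_norm2_pos _ (y0 + t * dy) Hx) as Hq.
  unfold lift_re, lift_im, lift_slope, onep_norm2, onep_re, onep_im in *.
  auto_derive.
  - repeat split; lra.
  - field. split; lra.
Qed.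

(* Along the segment z(s) from z2 to z1, s |-> <z1 - z2, G (z s)> has derivative
   |z1 - z2|^2 Re G' >= 0 and equal values at both ends, so Re G' vanishes at two
   distinct nearby points; but its zeros -ln d + i (2k+1) pi are isolated. *)
Lemma lift_injective (x1 y1 x2 y2 : R) : x1 <= - ln D -> x2 <= - ln D ->
  lift_re m x1 y1 = lift_re m x2 y2 -> lift_im m x1 y1 = lift_im m x2 y2 ->
  x1 = x2 /\ y1 = y2.
Proof.
  intros H1 H2 Ere Eim.
  set (dx := x1 - x2). set (dy := y1 - y2).
  destruct (Req_dec (dx ^ 2 + dy ^ 2) 0) as [Z | NZ].
  { assert (dx = 0) by nra. assert (dy = 0) by nra. unfold dx, dy in *. split; lra. }
  exfalso.
  set (zx := fun s => x2 + s * dx). set (zy := fun s => y2 + s * dy).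
  assert (Hseg : forall s, 0 <= s <= 1 -> zx s <= - ln D) by (intros s Hs; unfold zx, dx; nra).
  set (eps := / (3 * (Rabs dy + 1))).
  assert (Heps : eps * (Rabs dy + 1) = 1 / 3) by (unfold eps; field; pose proof (Rabs_pos dy); lra).
  pose proof (Rabs_pos dy).
  assert (Heps' : 0 < eps <= 1 / 3) by (split; [apply Rinv_0_lt_compat |]; nra).
  destruct (derive_vanishes_near_0
              (fun s => dx * lift_re m (zx s) (zy s) + dy * lift_im m (zx s) (zy s))
              (fun s => (dx ^ 2 + dy ^ 2) * lift_slope m (zx s) (zy s)) eps)
    as [c1 [c2 [Hc [Hc2 [Z1 Z2]]]]].
  - intros s Hs. apply is_derive_lift_along, half_plane_neg, Hseg, Hs.
  - intros s Hs. apply Rmult_le_pos; [nra | apply lift_slope_nonneg, Hseg, Hs].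
  - unfold zx, zy. rewrite !Rmult_0_l, !Rplus_0_r, !Rmult_1_l.
    unfold dx, dy. rewrite !Rplus_minus, Ere, Eim. reflexivity.
  - exact Heps'.
  - apply Rmult_integral in Z1 as [Z1 | Z1]; [contradiction |].
    apply Rmult_integral in Z2 as [Z2 | Z2]; [contradiction |].
    apply lift_slope_eq_0 in Z1 as [X1 C1]; [| apply Hseg; lra].
    apply lift_slope_eq_0 in Z2 as [X2 C2]; [| apply Hseg; lra].
    unfold zx, zy in *.
    assert (Hdx : (c2 - c1) * dx = 0) by lra.
    apply Rmult_integral in Hdx as [Hdx | Hdx]; [lra |].
    pose proof (cos_diff_of_cos_eq_m1 _ _ C2 C1) as Hcos.
    replace (y2 + c2 * dy - (y2 + c1 * dy)) with ((c2 - c1) * dy) in Hcos by ring.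
    assert (Hsmall : Rabs ((c2 - c1) * dy) < 1).
    { rewrite Rabs_mult, (Rabs_right (c2 - c1)) by lra. nra. }
    apply Rabs_def2 in Hsmall. pose proof PI2_1.
    apply cos_eq_1_small in Hcos; [| lra].
    apply Rmult_integral in Hcos as [Hdy | Hdy]; [lra |].
    apply NZ. rewrite Hdx, Hdy. ring.
Qed.

End HalfPlane.

Lemma Cmod_fpoly (m : nat) (z : C) : Cmod (fpoly (S m) z) = Cmod z * Cmod (1 + z) ^ m.
Proof.
  rewrite fpoly_Cpow. replace (S m - 1)%nat with m by lia. rewrite Cmod_mult, Cmod_pow.
  reflexivity.
Qed.

Lemma Cmod_one_plus_ge (z : C) : 1 - Cmod z <= Cmod (1 + z).
Proof.
  pose proof (Cmod_triangle (1 + z) (- z)) as H.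
  replace (1 + z + - z)%C with (RtoC 1) in H by ring.
  rewrite Cmod_opp, Cmod_1 in H. lra.
Qed.

Section Disk.
Variable m : nat.
Hypothesis Hm : (1 <= m)%nat.

Let D := INR (S m).

Lemma fpoly_eq_0_in_disk (w : C) : Cmod w <= / D -> fpoly (S m) w = RtoC 0 -> w = RtoC 0.
Proof.
  intros Hw E. pose proof (INR_S_ge_2 m Hm) as HD. fold D in HD.
  assert (Hinv : / D <= / 2) by (apply Rinv_le_contravar; lra).
  assert (H1 : 0 < Cmod (1 + w)) by (pose proof (Cmod_one_plus_ge w); lra).
  apply Cmod_eq_0. apply (f_equal Cmod) in E.
  rewrite Cmod_fpoly, Cmod_0 in E. apply Rmult_integral in E as [E | E]; [exact E |].
  exfalso. pose proof (pow_lt _ m H1). lra.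
Qed.

Lemma fpoly_injective_on_disk (u v : C) : Cmod u <= / D -> Cmod v <= / D ->
  fpoly (S m) u = fpoly (S m) v -> u = v.
Proof.
  intros Hu Hv E. pose proof (INR_S_ge_2 m Hm) as HD. fold D in HD.
  destruct (Ceq_dec u 0) as [Hu0 | Hu0].
  { subst u. symmetry. apply fpoly_eq_0_in_disk; [exact Hv |].
    rewrite <- E, fpoly_Cpow. ring. }
  destruct (Ceq_dec v 0) as [Hv0 | Hv0].
  { subst v. apply fpoly_eq_0_in_disk; [exact Hu |].
    rewrite E, fpoly_Cpow. ring. }
  destruct (polar_exp_surj u Hu0) as [x1 [y1 ->]].
  destruct (polar_exp_surj v Hv0) as [x2 [y2 ->]].
  rewrite Cmod_polar in Hu, Hv by (left; apply exp_pos).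
  apply exp_le_inv_iff in Hu, Hv; [| lra | lra].
  rewrite !fpoly_polar_exp in E by (apply (half_plane_neg m Hm); assumption).
  apply polar_exp_inj in E as [Ere [k Eim]].
  rewrite <- (polar_shift_2kPI _ y1 (- k)).
  rewrite <- (lift_re_shift_2kPI m x1 y1 (- k)) in Ere.
  destruct (lift_injective m Hm x1 (y1 + 2 * IZR (- k) * PI) x2 y2 Hu Hv Ere) as [-> ->].
  - rewrite lift_im_shift_2kPI, Eim, opp_IZR. ring.
  - reflexivity.
Qed.

End Disk.

Lemma bernoulli_strict (y : R) (m : nat) : 1 < y -> (1 <= m)%nat ->
  1 + INR (S m) * (y - 1) < y ^ S m.
Proof.
  intros Hy Hm. induction m as [|m IH]; [lia |].
  destruct (Nat.eq_dec m 0) as [-> | Hm0].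
  - simpl. nra.
  - specialize (IH ltac:(lia)). set (k := INR (S m)) in *.
    assert (y * (1 + k * (y - 1)) < y * y ^ S m) by (apply Rmult_lt_compat_l; lra).
    assert (0 <= k * (y - 1) ^ 2) by (apply Rmult_le_pos; [apply pos_INR | apply pow2_ge_0]).
    rewrite S_INR. fold k. cbn [pow] in *. lra.
Qed.

Lemma exp_mult_ln_pow (x : R) (n : nat) : 0 < x -> exp (INR n * ln x) = x ^ n.
Proof. intros Hx. rewrite <- ln_pow, exp_ln by (try apply pow_lt; exact Hx). reflexivity. Qed.

Lemma Cmod_one_plus_scal_sq (p : R) (z : C) :
  Cmod (1 + p * z) ^ 2 = (1 - p) + p * Cmod (1 + z) ^ 2 - p * (1 - p) * Cmod z ^ 2.
Proof.
  unfold Cmod. rewrite !pow2_sqrt by nra.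
  destruct z as [x y]. unfold Cplus, Cmult, RtoC. cbn [fst snd]. ring.
Qed.

Section LevelWeight.
Variables (m : nat) (p s1 : R).
Hypothesis Hm : (1 <= m)%nat.
Hypothesis Hp : 0 < p < 1.

Let D := INR m + 1.
Let a := p / (D - p).
Let r1 := / D.

(* If |w| = r and |w| |1+w|^m = r1 s1^m, then |1+w|^2 = s1^2 (r1/r)^(2/m) and, by
   [Cmod_one_plus_scal_sq], [level_weight r] = |w|^(2a) |1+pw|^2 = exp (-2 Re psi w). *)
Definition level_weight (r : R) : R :=
  exp (2 * a * ln r)
  * ((1 - p) + p * s1 ^ 2 * exp (2 / INR m * (ln r1 - ln r)) - p * (1 - p) * r ^ 2).

Let level_weight_deriv (r : R) : R :=
  exp (2 * a * ln r) * (2 * p * (1 - p) / (D - p)) / r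
  * (1 - D / INR m * s1 ^ 2 * exp (2 / INR m * (ln r1 - ln r)) - D * r ^ 2).

Lemma is_derive_level_weight (r : R) : 0 < r -> is_derive level_weight r (level_weight_deriv r).
Proof.
  intros Hr. pose proof (INR_ge_1 m Hm).
  unfold level_weight. auto_derive; [repeat split; exact Hr |].
  replace (ln r1 + - ln r) with (ln r1 - ln r) by ring.
  unfold level_weight_deriv, a, r1, D. field. repeat split; lra.
Qed.

(* With y = (D r)^(2/m) > 1 the bracket is (D y - m - y^(m+1)) / (D y) at worst,
   which is negative by Bernoulli's inequality. *)
Lemma level_weight_bracket_neg (r : R) : r1 < r -> INR m / D <= s1 ->
  1 - D / INR m * s1 ^ 2 * exp (2 / INR m * (ln r1 - ln r)) - D * r ^ 2 < 0.
Proof.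
  intros Hr Hs. pose proof (INR_ge_1 m Hm).
  assert (HD : 0 < D) by (unfold D; lra).
  assert (HDr : 1 < D * r).
  { unfold r1 in Hr. apply Rmult_lt_compat_l with (r := D) in Hr; [| exact HD].
    rewrite Rinv_r in Hr; lra. }
  assert (Hr0 : 0 < r) by nra.
  set (y := exp (2 / INR m * ln (D * r))).
  assert (Hy : 1 < y).
  { unfold y. rewrite <- exp_0. apply exp_increasing, Rmult_lt_0_compat.
    - apply Rdiv_lt_0_compat; lra.
    - rewrite <- ln_1. apply ln_increasing; lra. }
  assert (HE : exp (2 / INR m * (ln r1 - ln r)) = / y).
  { unfold y, r1. rewrite ln_Rinv, ln_mult, <- exp_Ropp by lra. f_equal. ring. }
  assert (Hym : y ^ m = (D * r) ^ 2).
  { unfold y.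
    rewrite <- exp_mult_ln_pow, <- (exp_mult_ln_pow (D * r) 2) by (try apply exp_pos; lra).
    rewrite ln_exp. f_equal. simpl INR. field. lra. }
  assert (HB := bernoulli_strict y m Hy Hm). cbn [pow] in HB. rewrite Hym, S_INR in HB.
  fold D in HB.
  assert (Hs2 : (INR m / D) ^ 2 <= s1 ^ 2).
  { apply pow_incr. split; [apply Rdiv_le_0_compat |]; lra. }
  rewrite HE.
  assert (D / INR m * (INR m / D) ^ 2 * / y <= D / INR m * s1 ^ 2 * / y).
  { apply Rmult_le_compat_r; [left; apply Rinv_0_lt_compat; lra |].
    apply Rmult_le_compat_l; [apply Rdiv_le_0_compat |]; lra. }
  enough (1 - D / INR m * (INR m / D) ^ 2 * / y - D * r ^ 2 < 0) by lra.
  replace (1 - D / INR m * (INR m / D) ^ 2 * / y - D * r ^ 2)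
    with ((D * y - (INR m + y * (D * r) ^ 2)) / (D * y)) by (field; lra).
  apply Rdiv_neg_pos; [unfold D in *; nra | nra].
Qed.

Lemma level_weight_decreasing (r : R) : r1 < r -> INR m / D <= s1 ->
  level_weight r < level_weight r1.
Proof.
  intros Hr Hs. pose proof (INR_ge_1 m Hm).
  assert (Hr1 : 0 < r1) by (unfold r1, D; apply Rinv_0_lt_compat; lra).
  destruct (MVT_cor2 level_weight level_weight_deriv r1 r Hr) as [c [Ec Hc]].
  { intros c Hc. apply is_derive_Reals, is_derive_level_weight. lra. }
  assert (Hk := level_weight_bracket_neg c ltac:(lra) Hs).
  assert (0 < exp (2 * a * ln c) * (2 * p * (1 - p) / (D - p)) / c).
  { apply Rdiv_lt_0_compat; [| lra]. apply Rmult_lt_0_compat; [apply exp_pos |].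
    apply Rdiv_lt_0_compat; [nra | unfold D; lra]. }
  assert (level_weight_deriv c < 0) by (unfold level_weight_deriv; nra).
  nra.
Qed.

Lemma level_weight_level_set (w : C) : 0 < Cmod w -> 0 < Cmod (1 + w) -> 0 < s1 ->
  Cmod w * Cmod (1 + w) ^ m = r1 * s1 ^ m ->
  level_weight (Cmod w) = exp (2 * a * ln (Cmod w)) * Cmod (1 + p * w) ^ 2.
Proof.
  intros Hw0 Hs2 Hs1 Hmod. pose proof (INR_ge_1 m Hm).
  assert (Hr1 : 0 < r1) by (unfold r1, D; apply Rinv_0_lt_compat; lra).
  set (s2 := Cmod (1 + w)) in *.
  assert (Hln : ln (Cmod w) + INR m * ln s2 = ln r1 + INR m * ln s1).
  { rewrite <- !ln_pow, <- !ln_mult by (try apply pow_lt; lra). rewrite Hmod. reflexivity. }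
  assert (Hs2sq : s2 ^ 2 = s1 ^ 2 * exp (2 / INR m * (ln r1 - ln (Cmod w)))).
  { rewrite <- (exp_mult_ln_pow s2 2), <- (exp_mult_ln_pow s1 2), <- exp_plus by assumption.
    apply (f_equal exp), Rmult_eq_reg_l with (INR m); [| lra]. simpl INR.
    replace (INR m * ((1 + 1) * ln s1 + 2 / INR m * (ln r1 - ln (Cmod w))))
      with (2 * (INR m * ln s1 + ln r1 - ln (Cmod w))) by (field; lra).
    lra. }
  unfold level_weight. rewrite Cmod_one_plus_scal_sq. fold s2. rewrite Hs2sq. ring.
Qed.

End LevelWeight.

Lemma RePsi_lt_of_weight_lt (p : R) (d : nat) (v w : C) :
  0 < Cmod v -> 0 < Cmod (1 + p * v) ->
  exp (2 * (p / (INR d - p)) * ln (Cmod w)) * Cmod (1 + p * w) ^ 2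
  < exp (2 * (p / (INR d - p)) * ln (Cmod v)) * Cmod (1 + p * v) ^ 2 ->
  Rbar_lt (RePsi p d v) (RePsi p d w).
Proof.
  intros Hv Hpv Hlt. unfold RePsi.
  destruct (Req_EM_T (Cmod v * Cmod (1 + p * v)) 0) as [Z | _].
  { exfalso. apply Rmult_integral in Z as [Z | Z]; lra. }
  destruct (Req_EM_T (Cmod w * Cmod (1 + p * w)) 0) as [_ | NZ]; [exact I |].
  cbn [Rbar_lt].
  assert (Hw : 0 < Cmod w /\ 0 < Cmod (1 + p * w)).
  { pose proof (Cmod_ge_0 w). pose proof (Cmod_ge_0 (1 + p * w)).
    split; apply Rnot_le_lt; intros Hle; apply NZ;
      [replace (Cmod w) with 0 by lra | replace (Cmod (1 + p * w)) with 0 by lra]; ring. }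
  apply ln_increasing in Hlt.
  2: { apply Rmult_lt_0_compat; [apply exp_pos | apply pow_lt; apply Hw]. }
  rewrite !ln_mult, !ln_exp, !ln_pow in Hlt by (try apply exp_pos; try apply pow_lt; lra).
  simpl INR in Hlt. lra.
Qed.

Lemma RePsi_lt_of_fpoly_eq (m : nat) (p : R) (v w : C) : (1 <= m)%nat -> 0 < p < 1 ->
  Cmod v = / INR (S m) -> / INR (S m) < Cmod w -> fpoly (S m) w = fpoly (S m) v ->
  Rbar_lt (RePsi p (S m) v) (RePsi p (S m) w).
Proof.
  intros Hm Hp Hv Hw E. pose proof (INR_ge_1 m Hm).
  rewrite S_INR in *. set (D := INR m + 1) in *.
  assert (HD : 0 < / D) by (apply Rinv_0_lt_compat; unfold D; lra).
  assert (Hs1 : INR m / D <= Cmod (1 + v)).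
  { replace (INR m / D) with (1 - / D) by (unfold D; field; lra).
    rewrite <- Hv. apply Cmod_one_plus_ge. }
  assert (Hs1p : 0 < Cmod (1 + v)).
  { pose proof (Rdiv_lt_0_compat (INR m) D ltac:(lra) ltac:(unfold D; lra)). lra. }
  assert (Hpv : 0 < Cmod (1 + p * v)).
  { pose proof (Cmod_one_plus_ge (p * v)) as H1.
    rewrite Cmod_mult, Cmod_R, Rabs_right, Hv in H1 by lra.
    assert (/ D <= / 2) by (apply Rinv_le_contravar; unfold D; lra). nra. }
  assert (Hmod : Cmod w * Cmod (1 + w) ^ m = / D * Cmod (1 + v) ^ m).
  { rewrite <- Hv, <- !Cmod_fpoly, E. reflexivity. }
  assert (Hs2 : 0 < Cmod (1 + w)).
  { destruct (Cmod_ge_0 (1 + w)) as [| Z]; [assumption | exfalso].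
    rewrite <- Z, pow_i, Rmult_0_r in Hmod by lia.
    pose proof (pow_lt _ m Hs1p). nra. }
  set (s1 := Cmod (1 + v)) in *.
  assert (Ev := level_weight_level_set m p s1 Hm Hp v ltac:(lra) Hs1p Hs1p
                  ltac:(rewrite Hv; reflexivity)).
  assert (Ew := level_weight_level_set m p s1 Hm Hp w ltac:(lra) Hs2 Hs1p Hmod).
  apply RePsi_lt_of_weight_lt; [lra | exact Hpv |].
  rewrite S_INR, <- Ev, <- Ew, Hv.
  apply level_weight_decreasing; assumption.
Qed.

Lemma le_0_of_le_mult_small (x c : R) : (forall e, 0 < e <= 1 -> x <= e * c) -> x <= 0.
Proof.
  intros H. destruct (Rle_or_lt x 0) as [|Hx]; [assumption | exfalso].
  pose proof (Rabs_pos c). pose proof (Rle_abs c).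
  set (e := Rmin 1 (x / (2 * (Rabs c + 1)))).
  assert (He : 0 < e <= 1).
  { split; [apply Rmin_pos; [lra | apply Rdiv_lt_0_compat; lra] | apply Rmin_l]. }
  assert (He' : e * (Rabs c + 1) <= x / 2).
  { apply Rle_trans with (x / (2 * (Rabs c + 1)) * (Rabs c + 1)).
    - apply Rmult_le_compat_r; [lra | apply Rmin_r].
    - right. field. lra. }
  specialize (H e He). nra.
Qed.

(* A substitute for continuity that is closed under ring operations by elementary
   estimates; it lets identities between polynomial expressions proved for z <> a be
   extended to z = a ([lipschitz_at_root]). *)
Definition lipschitz_at (h : C -> C) (a : C) : Prop :=
  exists B, forall z, Cmod (z - a) <= 1 -> Cmod (h z - h a) <= B * Cmod (z - a).

Lemma lipschitz_at_bounded (h : C -> C) (a : C) :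
  lipschitz_at h a -> exists M, forall z, Cmod (z - a) <= 1 -> Cmod (h z) <= M.
Proof.
  intros [B HB]. exists (Cmod (h a) + Rabs B). intros z Hz.
  replace (h z) with (h z - h a + h a)%C by ring.
  eapply Rle_trans; [apply Cmod_triangle |].
  specialize (HB z Hz). pose proof (Cmod_ge_0 (z - a)). pose proof (Rle_abs B).
  pose proof (Rabs_pos B). nra.
Qed.

Lemma lipschitz_at_const (c a : C) : lipschitz_at (fun _ => c) a.
Proof.
  exists 0. intros z _. replace (c - c)%C with (RtoC 0) by ring. rewrite Cmod_0. lra.
Qed.

Lemma lipschitz_at_id (a : C) : lipschitz_at (fun z => z) a.
Proof. exists 1. intros z _. lra. Qed.

Lemma lipschitz_at_plus (h1 h2 : C -> C) (a : C) :
  lipschitz_at h1 a -> lipschitz_at h2 a -> lipschitz_at (fun z => h1 z + h2 z)%C a.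
Proof.
  intros [B1 H1] [B2 H2]. exists (B1 + B2). intros z Hz.
  replace (h1 z + h2 z - (h1 a + h2 a))%C with ((h1 z - h1 a) + (h2 z - h2 a))%C by ring.
  eapply Rle_trans; [apply Cmod_triangle |].
  specialize (H1 z Hz). specialize (H2 z Hz). lra.
Qed.

Lemma lipschitz_at_opp (h : C -> C) (a : C) :
  lipschitz_at h a -> lipschitz_at (fun z => - h z)%C a.
Proof.
  intros [B H]. exists B. intros z Hz.
  replace (- h z - - h a)%C with (- (h z - h a))%C by ring. rewrite Cmod_opp. auto.
Qed.

Lemma lipschitz_at_mult (h1 h2 : C -> C) (a : C) :
  lipschitz_at h1 a -> lipschitz_at h2 a -> lipschitz_at (fun z => h1 z * h2 z)%C a.
Proof.
  intros L1 L2. destruct (lipschitz_at_bounded h2 a L2) as [M2 HM2].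
  destruct L1 as [B1 H1]. destruct L2 as [B2 H2].
  exists (Rabs B1 * M2 + Cmod (h1 a) * Rabs B2). intros z Hz.
  replace (h1 z * h2 z - h1 a * h2 a)%C
    with ((h1 z - h1 a) * h2 z + h1 a * (h2 z - h2 a))%C by ring.
  eapply Rle_trans; [apply Cmod_triangle | rewrite !Cmod_mult].
  specialize (H1 z Hz). specialize (H2 z Hz). specialize (HM2 z Hz).
  assert (A1 : Cmod (h1 z - h1 a) <= Rabs B1 * Cmod (z - a)).
  { eapply Rle_trans; [exact H1 | apply Rmult_le_compat_r; [apply Cmod_ge_0 | apply Rle_abs]]. }
  assert (A2 : Cmod (h2 z - h2 a) <= Rabs B2 * Cmod (z - a)).
  { eapply Rle_trans; [exact H2 | apply Rmult_le_compat_r; [apply Cmod_ge_0 | apply Rle_abs]]. }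
  assert (Cmod (h1 z - h1 a) * Cmod (h2 z) <= Rabs B1 * Cmod (z - a) * M2).
  { apply Rmult_le_compat; auto using Cmod_ge_0. }
  assert (Cmod (h1 a) * Cmod (h2 z - h2 a) <= Cmod (h1 a) * (Rabs B2 * Cmod (z - a))).
  { apply Rmult_le_compat_l; auto using Cmod_ge_0. }
  lra.
Qed.

Lemma lipschitz_at_root (k1 k2 : C -> C) (a : C) :
  lipschitz_at k1 a -> lipschitz_at k2 a ->
  (forall z, z <> a -> k1 z = ((z - a) * k2 z)%C) -> k1 a = RtoC 0.
Proof.
  intros [B1 H1] L2 Hk. destruct (lipschitz_at_bounded k2 a L2) as [M2 HM2].
  apply Cmod_eq_0, Rle_antisym; [| apply Cmod_ge_0].
  apply (le_0_of_le_mult_small _ (Rabs B1 + Rabs M2)). intros e He.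
  set (z := (a + RtoC e)%C).
  assert (Hz : (z - a)%C = RtoC e) by (unfold z; ring).
  assert (Hze : Cmod (z - a) = e) by (rewrite Hz, Cmod_R, Rabs_right; lra).
  assert (Hza : z <> a).
  { intros E. rewrite E in Hz. replace (a - a)%C with (RtoC 0) in Hz by ring.
    apply RtoC_inj in Hz. lra. }
  specialize (H1 z ltac:(lra)). specialize (HM2 z ltac:(lra)). rewrite Hze in H1.
  assert (Hkz : Cmod (k1 z) <= e * M2).
  { rewrite (Hk z Hza), Cmod_mult, Hze. apply Rmult_le_compat_l; lra. }
  replace (k1 a) with (k1 z - (k1 z - k1 a))%C by ring.
  eapply Rle_trans; [apply Cmod_triangle |]. rewrite Cmod_opp.
  pose proof (Rle_abs B1). pose proof (Rle_abs M2). nra.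
Qed.

Lemma Cmult_cancel_l (a b c : C) : a <> RtoC 0 -> (a * b = a * c)%C -> b = c.
Proof.
  intros Ha H. replace b with (/ a * (a * b))%C by (field; exact Ha).
  rewrite H. field. exact Ha.
Qed.

Lemma Cmult_integral (a b : C) : (a * b)%C = RtoC 0 -> a = RtoC 0 \/ b = RtoC 0.
Proof.
  intros H. destruct (Ceq_dec a 0) as [Ha | Ha]; [left; exact Ha | right].
  apply (Cmult_cancel_l a); [exact Ha |]. rewrite H. ring.
Qed.

Definition root_prod (us : list C) (z : C) : C :=
  fold_right Cmult (RtoC 1) (map (fun w => Cminus z w) us).

Lemma lipschitz_at_root_prod (us : list C) (a : C) : lipschitz_at (root_prod us) a.
Proof.
  induction us as [|w us IH]; unfold root_prod; cbn [map fold_right].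
  - apply lipschitz_at_const.
  - apply lipschitz_at_mult; [| exact IH].
    apply lipschitz_at_plus; [apply lipschitz_at_id | apply lipschitz_at_const].
Qed.

Lemma root_prod_app (us ws : list C) (z : C) :
  root_prod (us ++ ws) z = (root_prod us z * root_prod ws z)%C.
Proof.
  induction us as [|w us IH]; unfold root_prod in *; cbn [map fold_right app].
  - ring.
  - rewrite IH. ring.
Qed.

Lemma root_prod_cons (w : C) (us : list C) (z : C) :
  root_prod (w :: us) z = ((z - w) * root_prod us z)%C.
Proof. reflexivity. Qed.

Lemma root_prod_factor (a : C) (us : list C) :
  In a us -> exists rest, forall z, root_prod us z = ((z - a) * root_prod rest z)%C.
Proof.
  intros Hin. destruct (in_split a us Hin) as [l1 [l2 ->]].
  exists (l1 ++ l2). intros z. rewrite !root_prod_app, root_prod_cons. ring.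
Qed.

Lemma root_prod_in_eq_0 (a : C) (us : list C) : In a us -> root_prod us a = RtoC 0.
Proof.
  intros Hin. destruct (root_prod_factor a us Hin) as [rest ->]. ring.
Qed.

Lemma root_prod_factor2 (a : C) (us : list C) (i j : nat) :
  (i < j < length us)%nat -> nth i us (RtoC 0) = a -> nth j us (RtoC 0) = a ->
  exists rest, forall z, root_prod us z = ((z - a) * (z - a) * root_prod rest z)%C.
Proof.
  intros Hij Hi Hj.
  destruct (nth_split us (RtoC 0) (ltac:(lia) : (i < length us)%nat)) as [l1 [l2 [E Hl1]]].
  rewrite Hi in E.
  assert (Hin : In a l2).
  { rewrite E, app_nth2, Hl1 in Hj by lia.
    replace (j - i)%nat with (S (j - i - 1)) in Hj by lia. cbn [nth] in Hj.
    rewrite <- Hj. apply nth_In.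
    rewrite E, length_app in Hij. cbn [length] in Hij. lia. }
  destruct (root_prod_factor a l2 Hin) as [rest Hrest].
  exists (l1 ++ rest). intros z.
  rewrite E, !root_prod_app, root_prod_cons, Hrest. ring.
Qed.

Fixpoint pow_quot (n : nat) (U V : C) : C :=
  match n with
  | O => RtoC 0
  | S k => (U * pow_quot k U V + V ^ k)%C
  end.

Fixpoint pow_quot2 (n : nat) (U V : C) : C :=
  match n with
  | O => RtoC 0
  | S k => (U * pow_quot2 k U V + INR k * V ^ (k - 1))%C
  end.

Lemma Cpow_sub_factor (n : nat) (U V : C) : (U ^ n - V ^ n = (U - V) * pow_quot n U V)%C.
Proof.
  induction n as [|n IH]; cbn [Cpow pow_quot]; [ring |].
  replace (U * U ^ n - V * V ^ n)%C with (U * (U ^ n - V ^ n) + (U - V) * V ^ n)%C by ring.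
  rewrite IH. ring.
Qed.

Lemma pow_quot_expand (n : nat) (U V : C) :
  pow_quot n U V = (INR n * V ^ (n - 1) + (U - V) * pow_quot2 n U V)%C.
Proof.
  induction n as [|n IH]; cbn [pow_quot pow_quot2]; [simpl; ring |].
  rewrite IH, S_INR, RtoC_plus. replace (S n - 1)%nat with n by lia.
  destruct n as [|k]; [simpl; ring |].
  replace (S k - 1)%nat with k by lia. rewrite Cpow_S. ring.
Qed.

Lemma pow_quot2_diag (n : nat) (V : C) :
  (2 * V * pow_quot2 n V V = INR n * (INR n - 1) * V ^ (n - 1))%C.
Proof.
  induction n as [|n IH]; cbn [pow_quot2]; [simpl; ring |].
  replace (2 * V * (V * pow_quot2 n V V + INR n * V ^ (n - 1)))%C
    with (V * (2 * V * pow_quot2 n V V) + 2 * INR n * (V * V ^ (n - 1)))%C by ring.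
  rewrite IH, S_INR, RtoC_plus. replace (S n - 1)%nat with n by lia.
  destruct n as [|k]; [simpl; ring |].
  replace (S k - 1)%nat with k by lia. rewrite Cpow_S. ring.
Qed.

Lemma lipschitz_at_pow_quot2 (n : nat) (V a : C) :
  lipschitz_at (fun z => pow_quot2 n (1 + z) V) a.
Proof.
  induction n as [|n IH]; cbn [pow_quot2]; [apply lipschitz_at_const |].
  apply lipschitz_at_plus; [| apply lipschitz_at_const].
  apply lipschitz_at_mult; [| exact IH].
  apply lipschitz_at_plus; [apply lipschitz_at_const | apply lipschitz_at_id].
Qed.

Definition fpoly_deriv (m : nat) (v : C) : C :=
  (INR (S m) * (1 + v) ^ m - INR m * (1 + v) ^ (m - 1))%C.

Definition fpoly_rem (m : nat) (v u : C) : C :=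
  (pow_quot2 (S m) (1 + u) (1 + v) - pow_quot2 m (1 + u) (1 + v))%C.

(* f(u) = (1+u)^(m+1) - (1+u)^m: expand both powers around 1+v. *)
Lemma fpoly_taylor (m : nat) (u v : C) :
  (fpoly (S m) u - fpoly (S m) v
   = (u - v) * (fpoly_deriv m v + (u - v) * fpoly_rem m v u))%C.
Proof.
  rewrite !fpoly_Cpow. replace (S m - 1)%nat with m by lia.
  replace (u * (1 + u) ^ m - v * (1 + v) ^ m)%C
    with (((1 + u) ^ S m - (1 + v) ^ S m) - ((1 + u) ^ m - (1 + v) ^ m))%C
    by (rewrite !Cpow_S; ring).
  rewrite !Cpow_sub_factor, !pow_quot_expand. unfold fpoly_deriv, fpoly_rem.
  replace (S m - 1)%nat with m by lia. ring.
Qed.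

Lemma fpoly_deriv_factor (m : nat) (v : C) : (1 <= m)%nat ->
  fpoly_deriv m v = ((1 + v) ^ (m - 1) * (1 + INR (S m) * v))%C.
Proof.
  intros Hm. unfold fpoly_deriv. destruct m as [|k]; [lia |].
  replace (S k - 1)%nat with k by lia. rewrite Cpow_S, !S_INR, !RtoC_plus. ring.
Qed.

Lemma fpoly_rem_diag (m : nat) (v : C) : (1 <= m)%nat ->
  (2 * (1 + v) * fpoly_rem m v v = INR m * (1 + v) ^ (m - 1) * (2 + INR (S m) * v))%C.
Proof.
  intros Hm. unfold fpoly_rem.
  replace (2 * (1 + v) * (pow_quot2 (S m) (1 + v) (1 + v) - pow_quot2 m (1 + v) (1 + v)))%C
    with (2 * (1 + v) * pow_quot2 (S m) (1 + v) (1 + v)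
          - 2 * (1 + v) * pow_quot2 m (1 + v) (1 + v))%C by ring.
  rewrite !pow_quot2_diag. destruct m as [|k]; [lia |].
  replace (S (S k) - 1)%nat with (S k) by lia. replace (S k - 1)%nat with k by lia.
  rewrite Cpow_S, !S_INR, !RtoC_plus. ring.
Qed.

Lemma lipschitz_at_fpoly_rem (m : nat) (v a : C) : lipschitz_at (fpoly_rem m v) a.
Proof.
  unfold fpoly_rem. apply lipschitz_at_plus; [| apply lipschitz_at_opp];
    apply lipschitz_at_pow_quot2.
Qed.

Section NontrivialRoots.
Variables (m : nat) (v : C) (us : list C).
Hypothesis Hus : nontrivial_roots (S m) v us.

Lemma nontrivial_roots_root_prod (z : C) :
  z <> v -> (fpoly_deriv m v + (z - v) * fpoly_rem m v z)%C = root_prod us z.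
Proof.
  intros Hz. apply (Cmult_cancel_l (z - v)).
  - intros E. apply Hz. replace z with (z - v + v)%C by ring. rewrite E. ring.
  - rewrite <- fpoly_taylor. apply (proj2 Hus).
Qed.

Lemma nontrivial_roots_deriv : In v us -> fpoly_deriv m v = RtoC 0.
Proof.
  intros Hin. destruct (root_prod_factor v us Hin) as [rest Hrest].
  apply (lipschitz_at_root (fun _ => fpoly_deriv m v)
           (fun z => root_prod rest z - fpoly_rem m v z)%C v).
  - apply lipschitz_at_const.
  - apply lipschitz_at_plus; [apply lipschitz_at_root_prod |].
    apply lipschitz_at_opp, lipschitz_at_fpoly_rem.
  - intros z Hz. pose proof (nontrivial_roots_root_prod z Hz) as E. rewrite Hrest in E.
    replace (fpoly_deriv m v)
      with (fpoly_deriv m v + (z - v) * fpoly_rem m v z - (z - v) * fpoly_rem m v z)%C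
      by ring.
    rewrite E. ring.
Qed.

Lemma nontrivial_roots_rem (i j : nat) : (i < j < length us)%nat ->
  nth i us (RtoC 0) = v -> nth j us (RtoC 0) = v -> fpoly_rem m v v = RtoC 0.
Proof.
  intros Hij Hi Hj.
  assert (Hd : fpoly_deriv m v = RtoC 0).
  { apply nontrivial_roots_deriv. rewrite <- Hj. apply nth_In. lia. }
  destruct (root_prod_factor2 v us i j Hij Hi Hj) as [rest Hrest].
  apply (lipschitz_at_root (fpoly_rem m v) (root_prod rest) v).
  - apply lipschitz_at_fpoly_rem.
  - apply lipschitz_at_root_prod.
  - intros z Hz. apply (Cmult_cancel_l (z - v)).
    + intros E. apply Hz. replace z with (z - v + v)%C by ring. rewrite E. ring.
    + pose proof (nontrivial_roots_root_prod z Hz) as E. rewrite Hd, Hrest in E.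
      rewrite <- (Cplus_0_l ((z - v) * fpoly_rem m v z)), E. ring.
Qed.

End NontrivialRoots.

Lemma circle_encircling_origin (rho : R) : 0 < rho ->
  encircling_origin (fun _ => rho) (fun t => PI + 2 * PI * t).
Proof.
  intros Hrho. pose proof PI_RGT_0.
  split; [| split; [reflexivity | split; [ring |]]].
  - intros t _. split; [apply continuous_const | split; [| exact Hrho]].
    apply (ex_derive_continuous (K := R_AbsRing) (V := R_NormedModule)). auto_derive. exact I.
  - intros s t Hs Ht E. unfold polar_pt in E. injection E as Ec Es.
    apply Rmult_eq_reg_l in Ec, Es; try lra.
    assert (Hc : cos ((PI + 2 * PI * s) - (PI + 2 * PI * t)) = 1).
    { rewrite cos_minus, Ec, Es. pose proof (sin2_cos2 (PI + 2 * PI * t)). unfold Rsqr in H0. lra. }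
    apply cos_eq_1_small in Hc; nra.
Qed.

Lemma circle_start (rho : R) : polar_pt (fun _ => rho) (fun t => PI + 2 * PI * t) 0 = RtoC (- rho).
Proof.
  unfold polar_pt. replace (PI + 2 * PI * 0) with PI by ring.
  rewrite cos_PI, sin_PI. unfold RtoC. f_equal; ring.
Qed.

Section Circle.
Variables (m : nat) (v : C) (us : list C).
Hypothesis Hm : (1 <= m)%nat.
Hypothesis Hv : Cmod v = / INR (S m).
Hypothesis Hus : nontrivial_roots (S m) v us.

Lemma circle_one_plus_neq0 : (1 + v)%C <> RtoC 0.
Proof.
  intros Z. pose proof (Cmod_one_plus_ge v) as H. rewrite Z, Cmod_0, Hv in H.
  pose proof (INR_S_ge_2 m Hm).
  assert (/ INR (S m) <= / 2) by (apply Rinv_le_contravar; lra). lra.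
Qed.

Lemma circle_scaled_Cmod : Cmod (INR (S m) * v) = 1.
Proof.
  pose proof (INR_S_ge_2 m Hm). rewrite Cmod_mult, Cmod_R, Rabs_right, Hv by lra.
  field. lra.
Qed.

Lemma nontrivial_root_circle_RePsi_lt (p : R) (w : C) : 0 < p < 1 ->
  In w us -> w <> v -> Rbar_lt (RePsi p (S m) v) (RePsi p (S m) w).
Proof.
  intros Hp Hin Hwv.
  assert (Hfw : fpoly (S m) w = fpoly (S m) v).
  { replace (fpoly (S m) w) with (fpoly (S m) w - fpoly (S m) v + fpoly (S m) v)%C by ring.
    rewrite (proj2 Hus w). fold (root_prod us w). rewrite root_prod_in_eq_0 by exact Hin. ring. }
  apply RePsi_lt_of_fpoly_eq; [exact Hm | exact Hp | exact Hv | | exact Hfw].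
  destruct (Rlt_or_le (/ INR (S m)) (Cmod w)) as [| Hle]; [assumption | exfalso].
  apply Hwv, (fpoly_injective_on_disk m Hm); [exact Hle | | exact Hfw].
  rewrite Hv. apply Rle_refl.
Qed.

(* If v is one of the u_i, it is a double root of f(u) - f(v), so f'(v) = 0. *)
Lemma nontrivial_roots_circle_self : In v us -> v = RtoC (- 1 / INR (S m)).
Proof.
  intros Hin. pose proof (nontrivial_roots_deriv m v us Hus Hin) as Z.
  rewrite fpoly_deriv_factor in Z by exact Hm.
  apply Cmult_integral in Z as [Z | Z].
  - exfalso. revert Z. apply Cpow_nz, circle_one_plus_neq0.
  - pose proof (INR_S_ge_2 m Hm). apply (Cmult_cancel_l (RtoC (INR (S m)))).
    + intros E. apply RtoC_inj in E. lra.
    + replace (INR (S m) * v)%C with ((1 + INR (S m) * v) - 1)%C by ring. rewrite Z.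
      rewrite <- RtoC_mult. replace (INR (S m) * (-1 / INR (S m))) with (-1) by (field; lra).
      ring.
Qed.

(* A triple root would need f''(v) = 0 as well, i.e. 2 + d v = 0. *)
Lemma nontrivial_roots_circle_simple (i j : nat) : (i < j < length us)%nat ->
  nth i us (RtoC 0) = v -> nth j us (RtoC 0) = v -> False.
Proof.
  intros Hij Hi Hj. pose proof (nontrivial_roots_rem m v us Hus i j Hij Hi Hj) as Z.
  pose proof (fpoly_rem_diag m v Hm) as E. rewrite Z, Cmult_0_r in E.
  symmetry in E. apply Cmult_integral in E as [E | E].
  - apply Cmult_integral in E as [E | E].
    + apply RtoC_inj in E. pose proof (INR_ge_1 m Hm). lra.
    + revert E. apply Cpow_nz, circle_one_plus_neq0.
  - assert (Hdv : (INR (S m) * v)%C = RtoC (-2)).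
    { replace (INR (S m) * v)%C with (2 + INR (S m) * v - 2)%C by ring.
      rewrite E, <- RtoC_minus. f_equal. ring. }
    pose proof circle_scaled_Cmod as Hmod. rewrite Hdv, Cmod_R, Rabs_left in Hmod by lra. lra.
Qed.

Lemma circle_nontrivial_roots_RePsi (p : R) : 0 < p < 1 ->
  exists j : nat, (j < m)%nat /\
    forall i : nat, (i < m)%nat -> (i <> j \/ v <> RtoC (- 1 / INR (S m))) ->
      Rbar_lt (RePsi p (S m) v) (RePsi p (S m) (nth i us (RtoC 0))).
Proof.
  intros Hp. assert (Hlen : length us = m) by (rewrite (proj1 Hus); lia).
  assert (Hin : forall i, (i < m)%nat -> In (nth i us (RtoC 0)) us) by (intros; apply nth_In; lia).
  destruct (classic (exists j, (j < m)%nat /\ nth j us (RtoC 0) = v)) as [[j [Hj Hjv]] | Hno].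
  - exists j. split; [exact Hj |]. intros i Hi Hor.
    destruct (Ceq_dec (nth i us (RtoC 0)) v) as [Hiv | Hiv].
    + exfalso. destruct Hor as [Hij | Hnv].
      * destruct (Nat.lt_total i j) as [Hlt | [Heq | Hgt]]; [| contradiction |].
        -- apply (nontrivial_roots_circle_simple i j); [lia | exact Hiv | exact Hjv].
        -- apply (nontrivial_roots_circle_simple j i); [lia | exact Hjv | exact Hiv].
      * apply Hnv, nontrivial_roots_circle_self. rewrite <- Hjv. apply Hin, Hj.
    + apply nontrivial_root_circle_RePsi_lt; [exact Hp | apply Hin, Hi | exact Hiv].
  - exists 0%nat. split; [lia |]. intros i Hi _.
    apply nontrivial_root_circle_RePsi_lt; [exact Hp | apply Hin, Hi |].
    intros E. apply Hno. exists i. split; assumption.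
Qed.

End Circle.

Theorem proposition5p9 (p : R) (d : nat) (hp : 0 < p < 1) (hd : (2 <= d)%nat) :
  exists r th : R -> R,
    encircling_origin r th /\
    (exists t0, 0 <= t0 <= 1 /\ polar_pt r th t0 = RtoC (- 1 / INR d)) /\
    forall t, 0 <= t <= 1 ->
      forall us : list C, nontrivial_roots d (polar_pt r th t) us ->
        exists j : nat, (j < d - 1)%nat /\
          forall i : nat, (i < d - 1)%nat ->
            (i <> j \/ polar_pt r th t <> RtoC (- 1 / INR d)) ->
            Rbar_lt (RePsi p d (polar_pt r th t)) (RePsi p d (nth i us (RtoC 0))).
Proof.
  destruct d as [|m]; [lia |]. assert (Hm : (1 <= m)%nat) by lia.
  pose proof (INR_S_ge_2 m Hm) as HD.
  assert (Hr : 0 < / INR (S m)) by (apply Rinv_0_lt_compat; lra).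
  exists (fun _ => / INR (S m)), (fun t => PI + 2 * PI * t).
  split; [| split].
  - apply circle_encircling_origin, Hr.
  - exists 0. split; [lra |]. rewrite circle_start. f_equal. field. lra.
  - intros t _ us Hus. replace (S m - 1)%nat with m by lia.
    apply circle_nontrivial_roots_RePsi; [exact Hm | | exact Hus | exact hp].
    apply (Cmod_polar (/ INR (S m))). lra.
Qed.
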